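(* For every field $\mathbb{F}$, $n,d,e\ge1$ and tensors $A:[n]^{2d}\to\mathbb{F}$, $B:[n]^{2e}\to\mathbb{F}$, we have $\rho(A\otimes B)\le n^{-1}\min\{\rho(A),\rho(B)\}$, where $A\otimes B:[n]^{2(d+e)}\to\mathbb{F}$, $(A\otimes B)(x,y)=A(x)B(y)$.
   Context: For a tensor $C:[n]^{2m}\to\mathbb{F}$, $a,b\in\{0,1\}$, $\alpha\in\{0,1\}^{m-1}$: $I_{a,\alpha,b}=[2m]\cap\{a,2+\alpha_1,4+\alpha_2,\dots,2m-2+\alpha_{m-1},2m+b\}$, $J_{a,\alpha,b}=[2m]\cap\{1-a,3-\alpha_1,\dots,2m-1-\alpha_{m-1},2m+1-b\}$ (a partition of $[2m]$); $\mathrm{Mat}_{I,J}(C)$ is the flattening with rows indexed by coordinates in $I$ and columns by those in $J$; $\mathrm{relrk}_{a,\alpha,b}(C)=n^{-m}\mathrm{rank}\,\mathrm{Mat}_{I_{a,\alpha,b},J_{a,\alpha,b}}(C)$; and $\rho(C)=\max_{a,b\in\{0,1\}}\min\sum_{\alpha\in\{0,1\}^{m-1}}\mathrm{relrk}_{a,\alpha,b}(X_\alpha)$, the minimum over families $X_\alpha:[n]^{2m}\to\mathbb{F}$ with $C=\sum_\alpha X_\alpha$. *)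

From mathcomp Require Import all_boot all_order all_algebra.
From mathcomp Require Import boolp.
Set Implicit Arguments. Unset Strict Implicit. Unset Printing Implicit Defensive.
Import Order.TTheory GRing.Theory Num.Theory.
Local Open Scope ring_scope.

(* A tensor C : [n]^{2m} -> F.  Paper coordinate c in [2m] is the ordinal c-1. *)
Definition tensor (F : Type) (n m : nat) := {ffun 'I_(2 * m) -> 'I_n} -> F.

(* alpha in {0,1}^{m-1}: alpha_k (k = 1..m-1) is  alpha (k-1). *)
Definition bvec (m : nat) := {ffun 'I_(m.-1) -> bool}.

(* I_{a,alpha,b} = [2m] \cap {a, 2+alpha_1, ..., 2m-2+alpha_{m-1}, 2m+b}
   (as a set of ordinals j, paper coordinate j+1). *)
Definition Iset (m : nat) (a : bool) (al : bvec m) (b : bool) : {set 'I_(2 * m)} :=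
  [set j : 'I_(2 * m) | [|| (j.+1 == a :> nat), (j.+1 == 2 * m + b)%N
                          | [exists k : 'I_(m.-1), j.+1 == (2 * k.+1 + al k)%N]]].

Definition Jset (m : nat) (a : bool) (al : bvec m) (b : bool) : {set 'I_(2 * m)} :=
  ~: Iset a al b.

Section Flatten.
Variables (F : fieldType) (n m : nat).
Variables (I : {set 'I_(2 * m)}).

Definition rowT := {ffun {j : 'I_(2 * m) | j \in I} -> 'I_n}.
Definition colT := {ffun {j : 'I_(2 * m) | j \notin I} -> 'I_n}.

Definition merge (f : rowT) (g : colT) : {ffun 'I_(2 * m) -> 'I_n} :=
  [ffun k => match boolP (k \in I) with
             | AltTrue h => f (exist _ k h)
             | AltFalse h => g (exist _ k h)
             end].

Definition flat (C : tensor F n m) : 'M[F]_(#|{: rowT}|, #|{: colT}|) :=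
  \matrix_(i, j) C (merge (enum_val i) (enum_val j)).
End Flatten.

Definition rk (F : fieldType) (n m : nat) (a : bool) (al : bvec m) (b : bool)
  (C : tensor F n m) : nat := \rank (flat (Iset a al b) C).

Definition relrk (F : fieldType) (n m : nat) (a : bool) (al : bvec m) (b : bool)
  (C : tensor F n m) : rat := (rk a al b C)%:R / (n ^ m)%:R.

Definition decomp_val (F : fieldType) (n m : nat) (a b : bool) (C : tensor F n m)
  (r : nat) : Prop :=
  exists X : bvec m -> tensor F n m,
    (forall x, C x = \sum_(al : bvec m) X al x) /\
    (\sum_(al : bvec m) rk a al b (X al))%N = r.

Lemma decomp_val_ex (F : fieldType) (n m : nat) (a b : bool) (C : tensor F n m) :
  exists r, `[< decomp_val a b C r >].
Proof.
pose a0 : bvec m := [ffun => false].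
pose X := fun al : bvec m => if al == a0 then C else (fun _ => 0 : F).
exists (\sum_(al : bvec m) rk a al b (X al))%N; apply/asboolP; exists X; split=> //.
move=> x; rewrite (bigD1 a0) //= big1 ?addr0 /X ?eqxx //.
by move=> al /negbTE ->.
Qed.

Definition minrk (F : fieldType) (n m : nat) (a b : bool) (C : tensor F n m) : nat :=
  ex_minn (decomp_val_ex a b C).

Definition minrel (F : fieldType) (n m : nat) (a b : bool) (C : tensor F n m) : rat :=
  (minrk a b C)%:R / (n ^ m)%:R.

Definition rho (F : fieldType) (n m : nat) (C : tensor F n m) : rat :=
  Num.max (Num.max (minrel false false C) (minrel false true C))
          (Num.max (minrel true false C) (minrel true true C)).

Lemma tens_eq (d e : nat) : (2 * d + 2 * e = 2 * (d + e))%N.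
Proof. by rewrite mulnDr. Qed.

Definition tensor_prod (F : fieldType) (n d e : nat) (A : tensor F n d)
  (B : tensor F n e) : tensor F n (d + e) :=
  fun z => A [ffun k : 'I_(2 * d) => z (cast_ord (tens_eq d e) (lshift (2 * e) k))]
         * B [ffun k : 'I_(2 * e) => z (cast_ord (tens_eq d e) (rshift (2 * d) k))].

(* Fix a, b and an optimal decomposition A = sum_al X_al for the pair (a, ~~ b).
   Continuing each al with ~~ b on the pairs {2d, 2d+1}, {2d+2, 2d+3}, ... gives a
   pattern al' of A (x) B for which Mat_{I,J}(X_al (x) B) is, up to reindexing, the
   entrywise product of Mat_{a,al,~~b}(X_al) with a matrix whose rows (or columns)
   depend only on the e - 1 coordinates 2d+2, ..., 2d+2e-2 of B. Rank is
   submultiplicative under entrywise products, so the total rank grows by at most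
   n^(e-1) while the normalisation grows by n^e. Symmetrically, continuing a pattern
   of B to the left bounds rho(A (x) B) by rho(B) / n. *)

From Pilot Require Import Defs.
From mathcomp Require Import all_boot all_order all_algebra.
From mathcomp Require Import boolp zify ring.
Set Implicit Arguments. Unset Strict Implicit. Unset Printing Implicit Defensive.
Import Order.TTheory GRing.Theory Num.Theory.

Definition bvec_at m (al : bvec m) (x : nat) : bool :=
  if insub x is Some k then al k else false.

Lemma bvec_at_ord m (al : bvec m) (k : 'I_m.-1) : bvec_at al k = al k.
Proof. by rewrite /bvec_at valK. Qed.

Lemma bvec_at_out m (al : bvec m) x : m.-1 <= x -> bvec_at al x = false.
Proof. by move=> h; rewrite /bvec_at insubF // ltnNge h. Qed.

Lemma mem_Iset m a (al : bvec m) b (j : 'I_(2 * m)) : 0 < m ->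
  (j \in Iset a al b) =
  if j == 0 :> nat then a
  else if j.+1 == 2 * m then ~~ b
  else bvec_at al (j.-1 %/ 2) == ~~ odd j.
Proof.
move=> hm; rewrite inE; have hj := ltn_ord j.
have pairE : [exists k : 'I_m.-1, j.+1 == 2 * k.+1 + al k] =
    [&& 0 < j, j.+1 < 2 * m & bvec_at al (j.-1 %/ 2) == ~~ odd j].
  apply/existsP/and3P => [[k /eqP]|[j0 jm /eqP hal]].
    rewrite -bvec_at_ord; case: k => k hkm /= hk.
    have -> : j.-1 %/ 2 = k by case: (bvec_at al k) hk => /= hk; lia.
    by case: (bvec_at al k) hk => /= hk; split; lia.
  have hk : j.-1 %/ 2 < m.-1 by lia.
  exists (Ordinal hk); rewrite -bvec_at_ord /= hal.
  by apply/eqP; case hodd : (odd j) => /=; lia.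
rewrite pairE; have [->|j0] := eqVneq (j : nat) 0.
  by case: a; case: b; rewrite /= ?andbF ?orbF //; lia.
have [jm|jm] := eqVneq j.+1 (2 * m).
  by rewrite jm ltnn andbF orbF; case: a; case: b; lia.
by rewrite lt0n j0 ltn_neqAle jm (ltn_ord j); case: a; case: b; rewrite ?orbF /=; lia.
Qed.

Definition bvec_extr d e (b : bool) (al : bvec d) : bvec (d + e) :=
  [ffun k : 'I_((d + e).-1) => if k < d.-1 then bvec_at al k else ~~ b].

Definition bvec_extl d e (a : bool) (al : bvec e) : bvec (d + e) :=
  [ffun k : 'I_((d + e).-1) =>
     if k < d.-1 then a else if k == d.-1 :> nat then ~~ a else bvec_at al (k - d)].

Lemma bvec_at_extr d e b (al : bvec d) x :
  bvec_at (bvec_extr e b al) x =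
  if x < d.-1 then bvec_at al x else (x < (d + e).-1) && ~~ b.
Proof.
rewrite {1}/bvec_at; case: insubP => [k _ <-|]; first by rewrite ffunE ltn_ord.
rewrite -leqNgt => hx; have -> : (x < (d + e).-1) = false by lia.
by rewrite bvec_at_out; [case: ifP | lia].
Qed.

Lemma bvec_at_extl d e a (al : bvec e) x :
  bvec_at (bvec_extl d a al) x =
  if x < d.-1 then (x < (d + e).-1) && a
  else if x == d.-1 then (x < (d + e).-1) && ~~ a else bvec_at al (x - d).
Proof.
rewrite {1}/bvec_at; case: insubP => [k _ <-|]; first by rewrite ffunE ltn_ord.
rewrite -leqNgt => hx; have -> : (x < (d + e).-1) = false by lia.
by rewrite (@bvec_at_out _ al (x - d)); [case: ifP => //; case: ifP | lia].
Qed.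

Definition lcoord d e (k : 'I_(2 * d)) : 'I_(2 * (d + e)) :=
  cast_ord (tens_eq d e) (lshift (2 * e) k).

Definition rcoord d e (k : 'I_(2 * e)) : 'I_(2 * (d + e)) :=
  cast_ord (tens_eq d e) (rshift (2 * d) k).

(* Ordinal 2k+1 is the paper's even coordinate 2k+2. *)
Fact oddpos_subproof m (k : 'I_m.-1) : (2 * k).+1 < 2 * m.
Proof. by have := ltn_ord k; lia. Qed.

Definition oddpos m (k : 'I_m.-1) : 'I_(2 * m) := Ordinal (oddpos_subproof k).

Lemma mem_codom_oddpos m (k : 'I_(2 * m)) :
  odd k -> k.+1 < 2 * m -> k \in codom (@oddpos m).
Proof.
move=> ok km; have hk : k./2 < m.-1 by lia.
by apply/codomP; exists (Ordinal hk); apply: val_inj => /=; lia.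
Qed.

Section Embeddings.
Variables (d e : nat) (a b : bool).
Hypotheses (hd : 0 < d) (he : 0 < e).

Lemma lcoord_extr (al : bvec d) (k : 'I_(2 * d)) :
  (lcoord e k \in Iset a (bvec_extr e b al) b) = (k \in Iset a al (~~ b)).
Proof.
rewrite !mem_Iset ?addn_gt0 ?hd //= bvec_at_extr; have hk := ltn_ord k.
case: ifP => // k0; have -> : (k.+1 == 2 * (d + e)) = false by lia.
have [kd|kd] := eqVneq k.+1 (2 * d); last by have -> : k.-1 %/ 2 < d.-1 by lia.
have -> : (k.-1 %/ 2 < d.-1) = false by lia.
have -> : k.-1 %/ 2 < (d + e).-1 by lia.
by have -> : odd k by lia; case: b.
Qed.

Lemma rcoord_extr (al : bvec d) (k : 'I_(2 * e)) :
  (rcoord d k \in Iset a (bvec_extr e b al) b) = b -> k \in codom (@oddpos e).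
Proof.
rewrite mem_Iset ?addn_gt0 ?hd //= bvec_at_extr; have hk := ltn_ord k.
have -> : (2 * d + k == 0) = false by lia.
have [ke|ke] := eqVneq (2 * d + k).+1 (2 * (d + e)); first by case: b.
have -> : ((2 * d + k).-1 %/ 2 < d.-1) = false by lia.
have -> : (2 * d + k).-1 %/ 2 < (d + e).-1 by lia.
by case: b => /= h; apply: mem_codom_oddpos; lia.
Qed.

Lemma rcoord_extl (al : bvec e) (k : 'I_(2 * e)) :
  (rcoord d k \in Iset a (bvec_extl d a al) b) = (k \in Iset (~~ a) al b).
Proof.
rewrite !mem_Iset ?addn_gt0 ?hd //= bvec_at_extl; have hk := ltn_ord k.
have -> : (2 * d + k == 0) = false by lia.
have -> : ((2 * d + k).+1 == 2 * (d + e)) = (k.+1 == 2 * e) by lia.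
have -> : ((2 * d + k).-1 %/ 2 < d.-1) = false by lia.
have [k0|k0] := eqVneq (k : nat) 0.
  rewrite k0 /=; have -> : (1 == 2 * e) = false by lia.
  have -> : (2 * d + 0).-1 %/ 2 == d.-1 by lia.
  have -> : (2 * d + 0).-1 %/ 2 < (d + e).-1 by lia.
  by have -> : odd (2 * d + 0) = false by lia; case: a.
case: ifP => // ke.
have -> : ((2 * d + k).-1 %/ 2 == d.-1) = false by lia.
have -> : (2 * d + k).-1 %/ 2 - d = k.-1 %/ 2 by lia.
by have -> : odd (2 * d + k) = odd k by lia.
Qed.

Lemma lcoord_extl (al : bvec e) (k : 'I_(2 * d)) :
  (lcoord e k \in Iset a (bvec_extl d a al) b) = ~~ a -> k \in codom (@oddpos d).
Proof.
rewrite mem_Iset ?addn_gt0 ?hd //= bvec_at_extl; have hk := ltn_ord k.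
case: ifP => [_|k0]; first by case: a.
have -> : (k.+1 == 2 * (d + e)) = false by lia.
have -> : k.-1 %/ 2 < (d + e).-1 by lia.
move=> h; apply: mem_codom_oddpos; move: h;
  by case: a; case: ifP => ?; try case: ifP => ?; lia.
Qed.
End Embeddings.

Local Open Scope ring_scope.

Section MatrixRank.
Variable F : fieldType.

Lemma mxrank_sum_le (I : finType) (P : pred I) p q (A : I -> 'M[F]_(p, q)) :
  (\rank (\sum_(i | P i) A i)%R <= \sum_(i | P i) \rank (A i))%N.
Proof.
apply: (big_ind2 (fun M r => \rank M <= r)%N) => [|M1 r1 M2 r2 h1 h2|//].
- by rewrite mxrank0.
- exact: leq_trans (mxrank_add _ _) (leq_add h1 h2).
Qed.

Lemma mxrank_mxsub p q p' q' (f : 'I_p' -> 'I_p) (g : 'I_q' -> 'I_q) (A : 'M[F]_(p, q)) :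
  (\rank (mxsub f g A) <= \rank A)%N.
Proof.
rewrite mxsubrc (leq_trans (mxrankS (rowsub_sub _ _))) //.
by rewrite -mxrank_tr -[X in (_ <= X)%N]mxrank_tr trmx_mxsub mxrankS ?rowsub_sub.
Qed.

Lemma mxrank_hadamard p q (A B : 'M[F]_(p, q)) :
  (\rank (map2_mx *%R A B) <= \rank A * \rank B)%N.
Proof.
pose term (st : 'I_(\rank A) * 'I_(\rank B)) :=
  \col_i (col_base A i st.1 * col_base B i st.2) *m
  \row_j (row_base A st.1 j * row_base B st.2 j).
have -> : map2_mx *%R A B = \sum_st term st.
  apply/matrixP => i j; rewrite summxE -(pair_bigA _ (fun s t => term (s, t) i j)) mxE.
  rewrite -{1}(mulmx_base A) -{1}(mulmx_base B) !mxE big_distrl /=.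
  apply: eq_bigr => s _; rewrite big_distrr /=; apply: eq_bigr => t _.
  by rewrite !mxE big_ord1 !mxE mulrACA.
apply: leq_trans (mxrank_sum_le _ _) _.
have -> : (\rank A * \rank B = \sum_(st : 'I_(\rank A) * 'I_(\rank B)) 1)%N.
  by rewrite sum1_card card_prod !card_ord.
by apply: leq_sum => st _; rewrite (leq_trans (mxrankM_maxl _ _)) ?rank_leq_col.
Qed.

Lemma mxrank_le_card_rows (T : finType) p q (key : 'I_p -> T) (A : 'M[F]_(p, q)) :
  (forall i i' j, key i = key i' -> A i j = A i' j) -> (\rank A <= #|T|)%N.
Proof.
move=> hkey.
pose A0 : 'M_(#|T|, q) := \matrix_(t, j)
  if [pick i | key i == enum_val t] is Some i then A i j else 0.
have -> : A = rowsub (enum_rank \o key) A0.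
  apply/matrixP => i j; rewrite !mxE /= enum_rankK.
  by case: pickP => [i' /eqP /hkey -> //|/(_ i)]; rewrite eqxx.
exact: leq_trans (mxrankS (rowsub_sub _ _)) (rank_leq_row _).
Qed.

Lemma mxrank_le_card_cols (T : finType) p q (key : 'I_q -> T) (A : 'M[F]_(p, q)) :
  (forall i j j', key j = key j' -> A i j = A i j') -> (\rank A <= #|T|)%N.
Proof.
move=> hkey; rewrite -mxrank_tr (mxrank_le_card_rows (key := key)) // => j j' i /hkey.
by rewrite !mxE => ->.
Qed.
End MatrixRank.

Section Flattening.
Variables (F : fieldType) (n m : nat) (I : {set 'I_(2 * m)}).

Lemma mergeE_in (r : rowT n I) (c : colT n I) k (hk : k \in I) :
  Defs.merge r c k = r (exist _ k hk).
Proof.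
rewrite ffunE; destruct (boolP (k \in I)) as [h|h]; last by case/negP: h.
by f_equal; apply: val_inj.
Qed.

Lemma mergeE_out (r : rowT n I) (c : colT n I) k (hk : k \notin I) :
  Defs.merge r c k = c (exist _ k hk).
Proof.
rewrite ffunE; destruct (boolP (k \in I)) as [h|h]; first by case/negP: hk.
by f_equal; apply: val_inj.
Qed.

Lemma merge_row (r : rowT n I) (c c' : colT n I) k :
  k \in I -> Defs.merge r c k = Defs.merge r c' k.
Proof. by move=> hk; rewrite !(mergeE_in _ _ hk). Qed.

Lemma merge_col (r r' : rowT n I) (c : colT n I) k :
  k \notin I -> Defs.merge r c k = Defs.merge r' c k.
Proof. by move=> hk; rewrite !(mergeE_out _ _ hk). Qed.

Lemma flat_sum (J : finType) (P : pred J) (T : J -> tensor F n m) :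
  flat I (fun z => \sum_(j | P j) T j z) = \sum_(j | P j) flat I (T j).
Proof.
by apply/matrixP => i j; rewrite !mxE summxE; apply: eq_bigr => l _; rewrite mxE.
Qed.
End Flattening.

Section FlatteningProduct.
Variables (F : fieldType) (n m : nat) (I : {set 'I_(2 * m)}) (z0 : 'I_n).
Variables (m1 m2 : nat) (I1 : {set 'I_(2 * m1)}).
Variables (pl : 'I_(2 * m1) -> 'I_(2 * m)) (pr : 'I_(2 * m2) -> 'I_(2 * m)).

(* [c] is the side of the partition (rows if true) on which G only sees the
   coordinates [pos]: Mat_I(Z) is the entrywise product of a reindexed Mat_I1(X)
   with a matrix having at most n^s distinct rows (resp. columns). *)
Lemma rank_flat_mul s (pos : 'I_s -> 'I_(2 * m2)) (c : bool) (X : tensor F n m1)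
    (G : {ffun 'I_(2 * m2) -> 'I_n} -> F) (Z : tensor F n m) :
  (forall z, Z z = X [ffun k => z (pl k)] * G [ffun k => z (pr k)]) ->
  (forall k, (pl k \in I) = (k \in I1)) ->
  (forall k, (pr k \in I) = c -> k \in codom pos) ->
  (\rank (flat I Z) <= \rank (flat I1 X) * n ^ s)%N.
Proof.
move=> hZ hpl hpr.
pose r0 : rowT n I := [ffun => z0]; pose c0 : colT n I := [ffun => z0].
pose f (i : 'I_#|{: rowT n I}|) :=
  enum_rank ([ffun t => Defs.merge (enum_val i) c0 (pl (val t))] : rowT n I1).
pose g (j : 'I_#|{: colT n I}|) :=
  enum_rank ([ffun t => Defs.merge r0 (enum_val j) (pl (val t))] : colT n I1).
pose Y : 'M_(#|{: rowT n I}|, #|{: colT n I}|) :=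
  \matrix_(i, j) G [ffun k => Defs.merge (enum_val i) (enum_val j) (pr k)].
have -> : flat I Z = map2_mx *%R (mxsub f g (flat I1 X)) Y.
  apply/matrixP => i j; rewrite !mxE hZ !enum_rankK; congr (X _ * _).
  apply/ffunP => k; rewrite [LHS]ffunE.
  have [hk|hk] := boolP (k \in I1).
  - by rewrite (mergeE_in _ _ hk) [RHS]ffunE; apply: merge_row; rewrite hpl.
  - by rewrite (mergeE_out _ _ hk) [RHS]ffunE; apply: merge_col; rewrite hpl.
apply: leq_trans (mxrank_hadamard _ _) (leq_mul (mxrank_mxsub _ _ _) _).
have <- : #|{: {ffun 'I_s -> 'I_n}}| = (n ^ s)%N by rewrite card_ffun !card_ord.
case: c hpr => hpr.
- pose key (i : 'I_#|{: rowT n I}|) : {ffun 'I_s -> 'I_n} :=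
    [ffun k' => Defs.merge (enum_val i) c0 (pr (pos k'))].
  have keyE i k' : key i k' = Defs.merge (enum_val i) c0 (pr (pos k')) by rewrite [LHS]ffunE.
  apply: (mxrank_le_card_rows (key := key)) => i i' j hii'.
  rewrite !mxE; congr G; apply: eq_ffun => k.
  have [hk|hk] := boolP (pr k \in I); last exact: merge_col.
  have /codomP [k' ek] := hpr k hk; rewrite ek in hk *.
  by rewrite (merge_row _ _ c0 hk) (merge_row (enum_val i') _ c0 hk) -!keyE hii'.
- pose key (j : 'I_#|{: colT n I}|) : {ffun 'I_s -> 'I_n} :=
    [ffun k' => Defs.merge r0 (enum_val j) (pr (pos k'))].
  have keyE j k' : key j k' = Defs.merge r0 (enum_val j) (pr (pos k')) by rewrite [LHS]ffunE.
  apply: (mxrank_le_card_cols (key := key)) => i j j' hjj'.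
  rewrite !mxE; congr G; apply: eq_ffun => k.
  have [hk|hk] := boolP (pr k \in I); first exact: merge_row.
  have /codomP [k' ek] := hpr k (negbTE hk); rewrite ek in hk *.
  by rewrite (merge_col _ r0 _ hk) (merge_col (enum_val i) r0 _ hk) -!keyE hjj'.
Qed.
End FlatteningProduct.

Lemma rk_sum_le (F : fieldType) n m a (al : bvec m) b (J : finType) (P : pred J)
    (T : J -> tensor F n m) :
  (rk a al b (fun z => (\sum_(j | P j) T j z)%R) <= \sum_(j | P j) rk a al b (T j))%N.
Proof. by rewrite /rk flat_sum; apply: mxrank_sum_le. Qed.

(* An optimal decomposition of C is pushed along phi, its terms grouped by ext. *)
Lemma minrk_transfer (F : fieldType) n m m1 a b a' b' (Z : tensor F n m)
    (C : tensor F n m1) (phi : tensor F n m1 -> tensor F n m)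
    (ext : bvec m1 -> bvec m) (c : nat) :
  (forall X : bvec m1 -> tensor F n m1, (forall x, C x = \sum_al X al x) ->
     forall z, Z z = \sum_al phi (X al) z) ->
  (forall al X, rk a (ext al) b (phi X) <= rk a' al b' X * c)%N ->
  (minrk a b Z <= minrk a' b' C * c)%N.
Proof.
move=> hphi hrk; rewrite /minrk.
case: (ex_minnP (decomp_val_ex a' b' C)) => r /asboolP [X [hX <-]] _.
case: (ex_minnP (decomp_val_ex a b Z)) => r' _ hmin.
pose W al' : tensor F n m := fun z => \sum_(al | ext al == al') phi (X al) z.
have hW : decomp_val a b Z (\sum_al' rk a al' b (W al'))%N.
  by exists W; split=> // z; rewrite (hphi _ hX) (partition_big ext xpredT).
apply: leq_trans (hmin _ (asboolT hW)) _.
rewrite big_distrl /= (partition_big ext xpredT) //=; apply: leq_sum => al' _.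
apply: leq_trans (rk_sum_le _ _ _ _ _) _.
by apply: leq_sum => al /eqP <-.
Qed.

Lemma minrel_le_rho (F : fieldType) n m a b (C : tensor F n m) : minrel a b C <= rho C.
Proof. by rewrite /rho; case: a; case: b; rewrite !le_max lexx ?orbT. Qed.

Lemma rho_transfer (F : fieldType) n m m1 s (Z : tensor F n m) (C : tensor F n m1)
    (fa fb : bool -> bool) :
  (0 < n)%N -> m = (m1 + s.+1)%N ->
  (forall a b, minrk a b Z <= minrk (fa a) (fb b) C * n ^ s)%N ->
  rho Z <= n%:R^-1 * rho C.
Proof.
move=> hn hm hZ.
suff H a b : minrel a b Z <= n%:R^-1 * rho C by rewrite /rho !ge_max !H.
apply: le_trans (ler_wpM2l _ (minrel_le_rho (fa a) (fb b) C)); last by rewrite invr_ge0.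
rewrite /minrel (_ : n ^ m = n ^ m1 * n ^ s * n)%N; last by rewrite hm expnD expnSr mulnA.
apply: le_trans (_ : (minrk (fa a) (fb b) C * n ^ s)%:R / (n ^ m1 * n ^ s * n)%:R <= _).
  by rewrite ler_wpM2r ?invr_ge0 ?ler_nat.
have n0 : n%:R != 0 :> rat by rewrite pnatr_eq0 -lt0n.
rewrite !natrM !natrX le_eqVlt; apply/orP; left; apply/eqP.
by field; rewrite n0 !expf_neq0.
Qed.

Section TensorProduct.
Variables (F : fieldType) (n d e : nat).
Hypotheses (hn : (0 < n)%N) (hd : (0 < d)%N) (he : (0 < e)%N).
Variables (A : tensor F n d) (B : tensor F n e).

Lemma rk_tensor_prodl a b (al : bvec d) (X : tensor F n d) :
  (rk a (bvec_extr e b al) b (tensor_prod X B) <= rk a al (~~ b) X * n ^ e.-1)%N.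
Proof.
rewrite /rk; apply: (rank_flat_mul (Ordinal hn) (pl := @lcoord d e) (pr := @rcoord d e)
  (pos := @oddpos e)) => // k.
- exact: lcoord_extr.
- exact: rcoord_extr.
Qed.

Lemma rk_tensor_prodr a b (al : bvec e) (X : tensor F n e) :
  (rk a (bvec_extl d a al) b (tensor_prod A X) <= rk (~~ a) al b X * n ^ d.-1)%N.
Proof.
rewrite /rk; apply: (rank_flat_mul (Ordinal hn) (pl := @rcoord d e) (pr := @lcoord d e)
  (pos := @oddpos d)) => [z|k|k].
- exact: mulrC.
- exact: rcoord_extl.
- exact: lcoord_extl.
Qed.

Lemma minrk_tensor_prodl a b :
  (minrk a b (tensor_prod A B) <= minrk a (~~ b) A * n ^ e.-1)%N.
Proof.
apply: (minrk_transfer (phi := fun X => tensor_prod X B) (ext := bvec_extr e b)).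
- by move=> X hX z; rewrite /tensor_prod hX big_distrl.
- by move=> al X; apply: rk_tensor_prodl.
Qed.

Lemma minrk_tensor_prodr a b :
  (minrk a b (tensor_prod A B) <= minrk (~~ a) b B * n ^ d.-1)%N.
Proof.
apply: (minrk_transfer (phi := tensor_prod A) (ext := bvec_extl d a)).
- by move=> X hX z; rewrite /tensor_prod hX big_distrr.
- by move=> al X; apply: rk_tensor_prodr.
Qed.
End TensorProduct.

Theorem lemma4p9 (F : fieldType) (n d e : nat) (hn : (1 <= n)%N) (hd : (1 <= d)%N)
  (he : (1 <= e)%N) (A : tensor F n d) (B : tensor F n e) :
  rho (tensor_prod A B) <= (n%:R : rat)^-1 * Num.min (rho A) (rho B).
Proof.
have rhoA : rho (tensor_prod A B) <= n%:R^-1 * rho A.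
  apply: (rho_transfer (s := e.-1) (fa := id) (fb := negb) hn); first by rewrite prednK.
  exact: minrk_tensor_prodl.
have rhoB : rho (tensor_prod A B) <= n%:R^-1 * rho B.
  apply: (rho_transfer (s := d.-1) (fa := negb) (fb := id) hn); first by rewrite prednK // addnC.
  exact: minrk_tensor_prodr.
by have [] := leP (rho A) (rho B).
Qed.
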